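(* Let $(U,V)$ be a one-dimensional robot game. Its set of winning counter values is different from $\{0\}$ if and only if there exists a counter value $x\neq 0$ such that for every $v\in V$ there is $u\in U$ with $u+v=-x$.
   Context: A robot game in dimension one is a pair $(U,V)$ of finite nonempty subsets of $\mathbb{Z}$; $U$ belongs to the reacher and $V$ to the opponent. From an initial counter value $x_0\in\mathbb{Z}$, a play proceeds in rounds: in a round starting at counter value $x$, the opponent chooses $v\in V$ and the counter becomes $x+v$, then the reacher chooses $u\in U$ and the counter becomes $x+v+u$, where the round ends. The reacher wins the play if some round ends at $0$; by convention the reacher wins immediately if the play starts at $0$ (so $0$ is always winning). Strategies are functions from play prefixes to moves. A counter value $x$ is winning if the reacher has a strategy such that, against every opponent strategy, the play from $x$ is won by the reacher. (The paper calls the winning set trivial when it is $\{0\}$.) *)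

From mathcomp Require Import all_boot all_order all_algebra.
Set Implicit Arguments. Unset Strict Implicit. Unset Printing Implicit Defensive.
Import Order.TTheory GRing.Theory Num.Theory.
Local Open Scope ring_scope.

(* A one-dimensional robot game (U,V): U (reacher) and V (opponent) are
   finite nonempty sets of integers, represented as sequences. *)

(* A strategy maps a play prefix (initial counter value followed by the
   moves played so far) to a move. *)
Definition strategy := seq int -> int.

Definition legal (S : seq int) (s : strategy) : Prop := forall h, s h \in S.

(* Moves of even index (0,2,...)
   are the opponent's, moves of odd index are the reacher's. *)
Fixpoint moves (x0 : int) (sigma tau : strategy) (n : nat) : seq int :=
  match n with
  | 0 => [::]
  | n'.+1 =>
      let h := moves x0 sigma tau n' in
      rcons h (if odd n' then sigma (x0 :: h) else tau (x0 :: h))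
  end.

(* Counter value at the end of round k (rounds numbered from 0). *)
Definition round_end (x0 : int) (sigma tau : strategy) (k : nat) : int :=
  x0 + \sum_(m <- moves x0 sigma tau (k.*2.+2)) m.

Definition reacher_wins (x0 : int) (sigma tau : strategy) : Prop :=
  x0 = 0 \/ exists k, round_end x0 sigma tau k = 0.

Definition winning (U V : seq int) (x : int) : Prop :=
  exists sigma, legal U sigma /\
    forall tau, legal V tau -> reacher_wins x sigma tau.

(* A counter value x <> 0 from which the reacher can force 0 in a single round
   is winning, so such an x makes the winning set nontrivial.  Conversely, if
   every x <> 0 admits an opponent move v with x + v + u <> 0 for all u in U,
   the opponent plays such a v at every round; the counter then never ends a
   round at 0, so no nonzero counter value is winning. *)
From Stdlib Require Import Classical.
From mathcomp Require Import all_boot all_order all_algebra.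
Set Implicit Arguments. Unset Strict Implicit. Unset Printing Implicit Defensive.
Import Order.TTheory GRing.Theory Num.Theory.
Local Open Scope ring_scope.

Definition pick_or (S : seq int) (p : pred int) : int :=
  if has p S then nth 0 S (find p S) else head 0 S.

Lemma pick_or_mem (S : seq int) (p : pred int) : S != [::] -> pick_or S p \in S.
Proof.
rewrite /pick_or; case: ifP => [hp _ | _]; first by rewrite mem_nth // -has_find.
by case: S => //= a s _; rewrite mem_head.
Qed.

Lemma pick_orP (S : seq int) (p : pred int) : has p S -> p (pick_or S p).
Proof. by move=> hp; rewrite /pick_or hp nth_find. Qed.

Section Rounds.
Variables (x0 : int) (sigma tau : strategy).

Definition counter (n : nat) : int := \sum_(m <- x0 :: moves x0 sigma tau n) m.

Lemma round_endE k : round_end x0 sigma tau k = counter k.*2.+2.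
Proof. by rewrite /counter big_cons. Qed.

Lemma counter_round k (h := x0 :: moves x0 sigma tau k.*2) :
  counter k.*2.+2 = counter k.*2 + tau h + sigma (rcons h (tau h)).
Proof.
rewrite /counter /h /= odd_double /=.
by rewrite -!cats1 -!cat_cons !big_cat /= !big_seq1.
Qed.

End Rounds.

Lemma winning0 (U V : seq int) : U != [::] -> winning U V 0.
Proof.
move=> hU; exists (fun _ => pick_or U pred0).
by split=> [h | tau _]; [exact: pick_or_mem | left].
Qed.

Definition wins_in_one_round (U V : seq int) (x : int) : Prop :=
  forall v, v \in V -> exists2 u, u \in U & u + v = - x.

Lemma winning_of_one_round (U V : seq int) (x : int) :
  U != [::] -> wins_in_one_round U V x -> winning U V x.
Proof.
move=> hU hx; pose sigma h := pick_or U (fun u => \sum_(m <- h) m + u == 0).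
exists sigma; split=> [h | tau legal_tau]; first exact: pick_or_mem.
right; exists 0%N.
rewrite round_endE (counter_round _ _ _ 0) /counter /sigma /= !big_seq1 big_cons big_seq1.
have [u uU e] := hx _ (legal_tau [:: x]).
have : has (fun u => x + tau [:: x] + u == 0) U.
  by apply/hasP; exists u => //; rewrite -addrA (addrC _ u) e subrr.
by move/pick_orP/eqP.
Qed.

Lemma has_escape_move (U V : seq int) (c : int) :
  ~ wins_in_one_round U V c -> has (fun v => all (fun u => c + v + u != 0) U) V.
Proof.
apply: contra_notT => /hasPn no_escape v vV.
have /allPn [u uU] := no_escape v vV; rewrite negbK => /eqP e.
by exists u => //; apply/eqP; rewrite -subr_eq0 opprK addrC (addrC u) addrA e.
Qed.

Lemma not_winning_of_escape (U V : seq int) (x : int) :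
  V != [::] -> (forall c, c != 0 -> ~ wins_in_one_round U V c) -> x != 0 -> ~ winning U V x.
Proof.
move=> hV no_one_round_win x_neq0 [sigma [legal_sigma x_wins]].
pose tau h := pick_or V (fun v => all (fun u => \sum_(m <- h) m + v + u != 0) U).
have counter_neq0 k : counter x sigma tau k.*2 != 0.
  elim: k => [|k IH]; first by rewrite /counter big_seq1.
  rewrite doubleS counter_round.
  exact: (allP (pick_orP (has_escape_move (no_one_round_win _ IH))) _ (legal_sigma _)).
have [/eqP|[k]] := x_wins tau (fun h => pick_or_mem _ hV); first by rewrite (negPf x_neq0).
by apply/eqP; rewrite round_endE -doubleS.
Qed.

Theorem proposition4 (U V : seq int) (hU : U != [::]) (hV : V != [::]) :
  ~ (forall y : int, winning U V y <-> y = 0) <->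
  exists x : int, x != 0 /\ forall v, v \in V -> exists2 u, u \in U & u + v = - x.
Proof.
split=> [nontrivial | [x [x_neq0 x_one_round]] trivial].
- apply: NNPP => no_one_round_win; apply: nontrivial => y; split=> [| ->]; last exact: winning0.
  apply: contraPeq => y_neq0.
  apply: (not_winning_of_escape hV _ y_neq0) => c c_neq0 c_one_round.
  by apply: no_one_round_win; exists c.
- by move: x_neq0; rewrite ((trivial x).1 (winning_of_one_round hU x_one_round)).
Qed.
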